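(* Let $d\geq 1$ and let $n,m$ be integers with $\binom{d}{2}\leq m\leq dn-\binom{d+1}{2}$ and such that $m\bmod d=0$ if $d$ is odd and $m\bmod d=\frac{d}{2}$ if $d$ is even. Then there exists a $d$-degenerate graph $G$ with $n$ vertices and $m$ edges such that $$c(G)= n+\frac{(2^d-1)m}{d}-\frac{(d-3)2^d+d+1}{2}.$$
   Context: All graphs are finite, simple and undirected. A graph $G$ is $d$-degenerate if every subgraph of $G$ has a vertex of degree at most $d$. A clique of a graph $G$ is a (possibly empty) set of pairwise adjacent vertices; $c(G)$ denotes the number of cliques of $G$ (including the empty clique, all single vertices and all edges). *)

From mathcomp Require Import all_boot all_order all_algebra.
Set Implicit Arguments. Unset Strict Implicit. Unset Printing Implicit Defensive.

Definition simple_graph (T : finType) (e : rel T) : Prop :=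
  symmetric e /\ irreflexive e.

Definition is_clique (T : finType) (e : rel T) (A : {set T}) : bool :=
  [forall x in A, forall y in A, (x != y) ==> e x y].

(* c(G): number of cliques, including the empty one. *)
Definition nb_cliques (T : finType) (e : rel T) : nat :=
  #|[set A : {set T} | is_clique e A]|.

Definition nb_edges (T : finType) (e : rel T) : nat :=
  #|[set A : {set T} | (#|A| == 2) && is_clique e A]|.

Definition degenerate (d : nat) (T : finType) (e : rel T) : Prop :=
  forall (S : {set T}) (f : rel T),
    S != set0 ->
    symmetric f ->
    (forall x y, f x y -> [&& e x y, x \in S & y \in S]) ->
    exists2 v, v \in S & #|[set u | f v u]| <= d.

(* The extremal graph is a clique K on d vertices, joined completely to k further
   vertices (with m = C(d,2) + k d), plus n - d - k isolated vertices.  Every vertex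
   outside K has all its neighbours in K, so the graph is d-degenerate.  A clique
   meets the complement of K in at most one vertex v, so the cliques are the 2^d
   subsets of K, the 2^d sets v + X (X a subset of K) for each of the k joined
   vertices v, and the n - d - k isolated singletons; the closed formula is a
   rearrangement of 2^d (k + 1) + n - d - k. *)
From mathcomp Require Import all_boot all_order all_algebra.
From mathcomp Require Import ring zify.
Import GRing.Theory Num.Theory.

Lemma card_by_point_outside (T : finType) (A : {set T}) (Q : pred {set T}) :
  (forall C, Q C -> #|C :\: A| <= 1) ->
  #|[set C | Q C]| = #|[set C | Q C & C \subset A]|
     + \sum_v #|[set C | Q C & v \in C :\: A]|.
Proof.
move=> Q_le1.
have card_sum1 (P : pred {set T}) : #|[set C | P C]| = \sum_(C | P C) 1.
  by rewrite -sum1_card; apply: eq_bigl => C; rewrite inE.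
rewrite card_sum1.
rewrite (eq_bigr (fun C : {set T} => ((C \subset A) : nat) + #|C :\: A|)); last first.
  move=> C /Q_le1; rewrite -setD_eq0 -cards_eq0.
  by case: #|C :\: A| => [|[|]].
rewrite big_split /=; congr (_ + _).
  by rewrite card_sum1 big_mkcondr; apply: eq_bigr => C _; case: (C \subset A).
rewrite (eq_bigr (fun C : {set T} => \sum_v ((v \in C :\: A) : nat))); last first.
  move=> C _; rewrite -sum1_card big_mkcond; apply: eq_bigr => v _.
  by case: (v \in C :\: A).
rewrite exchange_big; apply: eq_bigr => v _.
by rewrite card_sum1 big_mkcondr; apply: eq_bigr => C _; case: (v \in C :\: A).
Qed.

Section SplitGraph.
Variables (d b n : nat).
Hypotheses (le_db : d <= b) (le_bn : b <= n).

(* The vertices [0, d) form the clique K, the vertices [d, b) are joined to K,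
   and the vertices [b, n) are isolated. *)
Definition split_graph : rel 'I_n := fun x y =>
  (x != y) && (((x < d) && (y < b)) || ((y < d) && (x < b))).

Definition core : {set 'I_n} := [set x : 'I_n | x < d].

Local Notation clique := (is_clique split_graph).

Lemma split_graph_sym : symmetric split_graph.
Proof. by move=> x y; rewrite /split_graph eq_sym orbC. Qed.

Lemma split_graph_irr : irreflexive split_graph.
Proof. by move=> x; rewrite /split_graph eqxx. Qed.

Lemma card_core : #|core| = d.
Proof.
have le_dn : d <= n by apply: leq_trans le_bn.
have -> : core = [set widen_ord le_dn i | i in 'I_d].
  apply/setP => x; rewrite inE; apply/idP/imsetP => [lt_xd | [i _ ->]].
    by exists (Ordinal lt_xd) => //; apply: val_inj.
  by rewrite /= ltn_ord.
rewrite card_imset ?card_ord // => i j /(congr1 val) /= ij.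
exact: val_inj.
Qed.

Lemma split_graph_outside {x y : 'I_n} :
  d <= x -> split_graph x y -> (y < d) && (x < b).
Proof.
move=> le_dx /andP [_ /orP [/andP [lt_xd _] | //]].
by rewrite ltnNge le_dx in lt_xd.
Qed.

Lemma cliqueP {C : {set 'I_n}} {x y : 'I_n} :
  clique C -> x \in C -> y \in C -> x != y -> split_graph x y.
Proof.
move=> /forallP /(_ x) /implyP C_x xC.
by move: (C_x xC) => /forallP /(_ y) /implyP C_xy /C_xy /implyP.
Qed.

Lemma clique_of_pairs (C : {set 'I_n}) :
  (forall x y, x \in C -> y \in C -> x != y -> split_graph x y) -> clique C.
Proof.
move=> pairs; apply/forallP => x; apply/implyP => xC.
by apply/forallP => y; apply/implyP => yC; apply/implyP; apply: pairs.
Qed.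

Lemma sub_core_clique (C : {set 'I_n}) : C \subset core -> clique C.
Proof.
move=> /subsetP C_core; apply: clique_of_pairs => x y xC yC neq_xy.
move: (C_core x xC) (C_core y yC); rewrite !inE /split_graph neq_xy => -> lt_yd.
by rewrite (leq_trans lt_yd le_db).
Qed.

Lemma clique_outside_le1 (C : {set 'I_n}) : clique C -> #|C :\: core| <= 1.
Proof.
move=> cl; apply/card_le1_eqP => x y; rewrite !inE -!leqNgt.
move=> /andP [le_dx xC] /andP [le_dy yC]; apply/eqP/negPn/negP => neq_xy.
have /andP [lt_xd _] := split_graph_outside le_dy (cliqueP cl yC xC neq_xy).
by rewrite ltnNge le_dx in lt_xd.
Qed.

Lemma clique_through_joined (C : {set 'I_n}) (v : 'I_n) : d <= v -> v < b ->
  (clique C && (v \in C)) = (C :\ v \subset core) && (v \in C).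
Proof.
move=> le_dv lt_vb; apply/andP/andP => -[C_ok vC]; split=> //.
  apply/subsetP => x; rewrite !inE eq_sym => /andP [neq_vx xC].
  by case/andP: (split_graph_outside le_dv (cliqueP C_ok vC xC neq_vx)).
have in_core z : z \in C -> z != v -> z < d.
  by move=> zC neq_zv; have := subsetP C_ok z; rewrite !inE neq_zv zC => /(_ isT).
apply: clique_of_pairs => x y xC yC neq_xy; rewrite /split_graph neq_xy.
have [x_v | neq_xv] := eqVneq x v.
  by subst x; rewrite eq_sym in neq_xy; rewrite (in_core y) // lt_vb /= orbT.
have [y_v | neq_yv] := eqVneq y v; first by subst y; rewrite (in_core x) // lt_vb.
by rewrite (in_core x) // (leq_trans (in_core y yC neq_yv) le_db).
Qed.

Lemma clique_through_isolated (C : {set 'I_n}) (v : 'I_n) : b <= v ->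
  (clique C && (v \in C)) = (C == [set v]).
Proof.
move=> le_bv; apply/andP/eqP => [[C_ok vC] | ->]; last first.
  split; last exact: set11.
  by apply: clique_of_pairs => x y /set1P -> /set1P ->; rewrite eqxx.
apply/setP => x; rewrite inE; apply/idP/eqP => [xC | -> //].
apply/eqP/negPn/negP; rewrite eq_sym => neq_vx.
have le_dv : d <= v := leq_trans le_db le_bv.
have /andP [_ lt_vb] := split_graph_outside le_dv (cliqueP C_ok vC xC neq_vx).
by rewrite ltnNge le_bv in lt_vb.
Qed.

Lemma card_cliques_through (P : pred nat) (v : 'I_n) :
  #|[set C : {set 'I_n} | (P #|C| && clique C) & v \in C :\: core]|
  = if v < d then 0
    else if v < b then #|[set X : {set 'I_n} | X \subset core & P #|X|.+1]| else P 1.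
Proof.
have [lt_vd | le_dv] := ltnP v d.
  apply/eqP; rewrite cards_eq0; apply/eqP/setP => C.
  by rewrite !inE lt_vd andbF.
have v_core : v \notin core by rewrite inE -leqNgt.
have through_v (C : {set 'I_n}) : (v \in C :\: core) = (v \in C).
  by rewrite inE v_core.
have [lt_vb | le_bv] := ifPn; last rewrite -leqNgt in le_bv.
  have -> : [set C : {set 'I_n} | (P #|C| && clique C) & v \in C :\: core]
            = [set v |: X | X in [set X : {set 'I_n} | X \subset core & P #|X|.+1]].
    apply/setP => C; rewrite [in LHS]inE through_v -andbA clique_through_joined //.
    apply/idP/imsetP => [/and3P [PC C_core vC] | [X]].
      exists (C :\ v); last by rewrite setD1K.
      by rewrite inE C_core /=; move: PC; rewrite -{1}(setD1K vC) cardsU1 setD11.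
    rewrite inE => /andP [X_core PX] ->.
    have vX : v \notin X by apply: contra v_core; apply: (subsetP X_core).
    by rewrite cardsU1 vX PX setU11 setU1K ?andbT.
  apply: card_in_imset => X Y; rewrite !inE => /andP [X_core _] /andP [Y_core _] XY.
  have vX : v \notin X by apply: contra v_core; apply: (subsetP X_core).
  have vY : v \notin Y by apply: contra v_core; apply: (subsetP Y_core).
  by rewrite -(setU1K vX) -(setU1K vY) XY.
transitivity #|[set C : {set 'I_n} | (C == [set v]) && P 1]|.
  apply: eq_card => C; rewrite [in LHS]inE through_v -andbA clique_through_isolated //.
  by rewrite inE andbC; case: eqP => // ->; rewrite cards1.
case: (P 1).
  by rewrite /= -(cards1 [set v]); apply: eq_card => C; rewrite !inE andbT.
by apply/eqP; rewrite cards_eq0; apply/eqP/setP => C; rewrite !inE andbF.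
Qed.

Lemma sum_over_zones (x y : nat) :
  \sum_(v : 'I_n) (if v < d then 0 else if v < b then x else y)
  = (b - d) * x + (n - b) * y.
Proof.
rewrite -(big_mkord xpredT (fun v => if v < d then 0 else if v < b then x else y)).
rewrite (@big_cat_nat _ _ _ d 0 n _ _ (leq0n d) (leq_trans le_db le_bn)).
rewrite (@big_cat_nat _ _ _ b d n _ _ le_db le_bn) /=.
rewrite (@eq_big_nat _ _ _ 0 d _ (fun _ => 0)); last by move=> i /andP [_ ->].
rewrite (@eq_big_nat _ _ _ d b _ (fun _ => x)); last first.
  by move=> i /andP [le_di lt_ib]; rewrite ltnNge le_di lt_ib.
rewrite (@eq_big_nat _ _ _ b n _ (fun _ => y)); last first.
  by move=> i /andP [le_bi _]; rewrite ltnNge (leq_trans le_db le_bi) ltnNge le_bi.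
by rewrite !sum_nat_const_nat muln0.
Qed.

Lemma card_cliques_by_size (P : pred nat) :
  #|[set C : {set 'I_n} | P #|C| && clique C]|
  = #|[set X : {set 'I_n} | X \subset core & P #|X|]|
    + (b - d) * #|[set X : {set 'I_n} | X \subset core & P #|X|.+1]| + (n - b) * P 1.
Proof.
rewrite (@card_by_point_outside _ core (fun C => P #|C| && clique C)); last first.
  by move=> C /andP [_ /clique_outside_le1].
rewrite (eq_bigr _ (fun v _ => card_cliques_through P v)) sum_over_zones addnA.
congr (_ + _ + _); apply: eq_card => X; rewrite !inE andbC.
by case X_core: (X \subset core); rewrite // sub_core_clique ?andbT.
Qed.

Lemma nb_cliques_split_graph : nb_cliques split_graph = 2 ^ d * (b - d).+1 + (n - b).
Proof.
have all_subsets : #|[set X : {set 'I_n} | X \subset core & predT #|X|.+1]| = 2 ^ d.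
  by rewrite -card_core -card_powerset; apply: eq_card => X; rewrite !inE andbT.
transitivity #|[set C : {set 'I_n} | predT #|C| && clique C]|.
  by apply: eq_card => C; rewrite !inE.
by rewrite card_cliques_by_size all_subsets /= muln1 mulnS [(b - d) * _]mulnC.
Qed.

Lemma nb_edges_split_graph : nb_edges split_graph = 'C(d, 2) + (b - d) * d.
Proof.
rewrite /nb_edges (card_cliques_by_size (pred1 2)) /= muln0 addn0.
by rewrite !cards_draws card_core bin1.
Qed.

Lemma split_graph_degenerate : degenerate d split_graph.
Proof.
move=> S f S_ne0 _ f_sub.
have nbhd_core v : v \in S -> (d <= v \/ S \subset core) ->
    #|[set u | f v u]| <= d.
  move=> vS v_ok; rewrite -card_core; apply: subset_leq_card; apply/subsetP => u.
  rewrite inE => /f_sub /and3P [e_vu _ uS].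
  case: v_ok => [le_dv | /subsetP S_core]; last exact: S_core.
  by case/andP: (split_graph_outside le_dv e_vu); rewrite inE.
case: (pickP [pred x | (x \in S) && (d <= x)]) => [v /andP [vS le_dv] | S_small].
  by exists v => //; apply: nbhd_core => //; left.
case/set0Pn: S_ne0 => v vS; exists v => //; apply: nbhd_core => //; right.
by apply/subsetP => u uS; move: (S_small u); rewrite /= uS /= inE ltnNge => ->.
Qed.

End SplitGraph.

Lemma bin2_double d : 'C(d, 2) * 2 = d * d.-1.
Proof. by rewrite mulnC -mul_bin_diag bin1. Qed.

Lemma bin2_modn d : 'C(d, 2) %% d = if odd d then 0 else d./2.
Proof.
have [-> // | d_gt0] := posnP d.
have := bin2_double d; have := odd_double_half d.
case: odd => /= d_eq C2.
  have -> : 'C(d, 2) = d./2 * d by nia.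
  exact: modnMl.
have -> : 'C(d, 2) = (d./2).-1 * d + d./2 by nia.
by rewrite modnMDl modn_small //; lia.
Qed.

Lemma nb_cliques_closed_form (d n k : nat) : 1 <= d -> d + k <= n ->
  ((2 ^ d * k.+1 + (n - (d + k)))%:R : rat) =
    (n%:R + (2 ^ d - 1)%:R * ('C(d, 2) + k * d)%:R / d%:R
     - (((d%:Z - 3) * (2 ^ d)%:Z + d%:Z + 1)%:~R / 2))%R.
Proof.
move=> d_gt0 le_dk_n.
have bin2_rat : ('C(d, 2)%:R : rat) = (d%:R * (d%:R - 1) / 2)%R.
  have pred_rat : (d.-1%:R : rat) = (d%:R - 1)%R.
    by rewrite -{2}(prednK d_gt0) -addn1 natrD addrK.
  have := congr1 (fun x => x%:R : rat) (bin2_double d).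
  by rewrite /= !natrM pred_rat => <-; field.
have d_neq0 : (d%:R != 0 :> rat)%R by rewrite pnatr_eq0 -lt0n.
rewrite !natrD !natrM !natrB ?expn_gt0 // bin2_rat !intrD !intrM intrB -!pmulrn.
by field.
Qed.

Theorem proposition4 (d n m : nat) :
  1 <= d ->
  'C(d, 2) <= m ->
  m + 'C(d.+1, 2) <= d * n ->
  (if odd d then m %% d = 0 else m %% d = d./2) ->
  exists e : rel 'I_n,
    [/\ simple_graph e, degenerate d e, nb_edges e = m &
     ((nb_cliques e)%:R : rat) =
       n%:R + (2 ^ d - 1)%:R * m%:R / d%:R
       - (((d%:Z - 3) * (2 ^ d)%:Z + d%:Z + 1)%:~R / 2)]%R.
Proof.
move=> d_gt0 le_bin2_m m_le m_mod.
have [k m_eq] : exists k, m = 'C(d, 2) + k * d.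
  have : d %| m - 'C(d, 2).
    by rewrite -eqn_mod_dvd // bin2_modn; case: (odd d) m_mod => ->.
  by case/dvdnP => k m_sub; exists k; lia.
have le_dk_n : d + k <= n.
  have := bin2_double d; move: m_le; rewrite binS bin1 m_eq -(leq_pmul2l d_gt0); nia.
have le_d_dk : d <= d + k := leq_addr k d.
exists (split_graph d (d + k) n); split.
- exact: (conj (split_graph_sym _ _ _) (split_graph_irr _ _ _)).
- exact: split_graph_degenerate.
- by rewrite nb_edges_split_graph // addKn m_eq.
- by rewrite nb_cliques_split_graph // addKn m_eq nb_cliques_closed_form.
Qed.
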